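(* Let $Y$ be a topological space such that the diagonal $\Delta Y=\{(y,y):y\in Y\}$ is statistically closed in $Y\times Y$, and let $X$ be an open subspace of $Y$ which is not statistically compact. Define $f:Y\to X^s$ by $f(x)=x$ if $x\in X$ and $f(x)=\infty^X$ otherwise. Then $f$ is statistically continuous, where $X^s$ carries the topology $\tau^X_s$.
   Context: For $A\subseteq\mathbb{N}$ let $d_n(A)=|A\cap\{1,\dots,n\}|/n$, $\overline{d}(A)=\limsup_n d_n(A)$, $\underline{d}(A)=\liminf_n d_n(A)$, and $d(A)$ their common value when equal. A sequence in $X$ is a map from an infinite subset $M\subseteq\mathbb{N}$ into $X$, written $(x_n)_{n\in M}$; a subsequence is $(x_n)_{n\in N}$ with $N\subseteq M$ infinite. It is nonthin if $\overline{d}(M)>0$. A nonthin sequence $(x_n)_{n\in M}$ is statistically convergent to $a\in X$ if for every open $U\ni a$, $d(\{n\in M:x_n\notin U\})=0$. The statistical closure $\overline{F}^{ST}$ of $F\subseteq X$ is the set of $x\in X$ such that some nonthin sequence in $F$ is statistically convergent to $x$; $F$ is statistically closed if $\overline{F}^{ST}=F$. A topological space is statistically compact if every nonthin sequence in it has a nonthin subsequence that is statistically convergent to some point of the space; a subset is statistically compact if it is so in the subspace topology. For $(X,\tau)$ not statistically compact, the one point statistical compactification is $X^s=X\cup\{\infty^X\}$ ($\infty^X\notin X$) with topology $\tau^X_s=\tau\cup\{X^s\setminus C: C$ closed and statistically compact subset of $X\}$. A function $f$ is statistically continuous if whenever a nonthin sequence $(x_n)_{n\in K}$ statistically converges to $x$,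 $(f(x_n))_{n\in K}$ statistically converges to $f(x)$. *)

From HB Require Import structures.
From mathcomp Require Import all_boot all_order all_algebra.
From mathcomp Require Import all_classical all_reals all_analysis.
From mathcomp Require Import Rstruct Rstruct_topology.
Set Implicit Arguments. Unset Strict Implicit. Unset Printing Implicit Defensive.
Import Order.TTheory GRing.Theory Num.Theory.
Local Open Scope classical_set_scope.
Local Open Scope ring_scope.

Notation RR := Rdefinitions.R.

Definition dens (A : set nat) (n : nat) : RR :=
  (\sum_(1 <= k < n.+1) (if `[< A k >] then 1%N else 0%N))%:R / n%:R.

Definition upper_density (A : set nat) : \bar RR :=
  limn_esup (fun n => (dens A n)%:E).

Definition density_zero (A : set nat) : Prop :=
  dens A n @[n --> \oo] --> (0 : RR).

(* A sequence is a map from an index set M ⊆ ℕ; it is nonthin if \overline{d}(M) > 0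
   (this forces M to be infinite). *)
Definition nonthin (M : set nat) : Prop := (0 < upper_density M)%E.

(* A "space" is given by a type T and its family of open sets [op] (a topology on a
   carrier set, possibly presented inside a larger ambient type). *)
Definition stat_conv {T} (op : set (set T)) (M : set nat) (x : nat -> T) (a : T) : Prop :=
  nonthin M /\
  forall U, op U -> U a -> density_zero [set n | M n /\ ~ U (x n)].

Definition stat_closure {T} (op : set (set T)) (F : set T) : set T :=
  [set a | exists (M : set nat) (x : nat -> T),
     nonthin M /\ (forall n, M n -> F (x n)) /\ stat_conv op M x a].

Definition stat_closed {T} (op : set (set T)) (F : set T) : Prop :=
  stat_closure op F = F.

Definition subspace_open {T} (op : set (set T)) (C : set T) : set (set T) :=
  [set V | exists W, op W /\ V = W `&` C].

Definition stat_compact_space {T} (op : set (set T)) (C : set T) : Prop :=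
  forall (M : set nat) (x : nat -> T), nonthin M -> (forall n, M n -> C (x n)) ->
    exists (N : set nat) (a : T),
      N `<=` M /\ nonthin N /\ C a /\ stat_conv op N x a.

Definition stat_compact_in {T} (op : set (set T)) (C : set T) : Prop :=
  stat_compact_space (subspace_open op C) C.

Definition closed_in {T} (op : set (set T)) (S C : set T) : Prop :=
  C `<=` S /\ op (S `\` C).

(* One point statistical compactification X^s = X ∪ {∞^X} of the space (X, opX),
   realized inside [option T]: x ∈ X is [Some x], ∞^X is [None]. *)
Definition Xs_carrier {T} (X : set T) : set (option T) := (Some @` X) `|` [set None].

Definition Xs_open {T} (opX : set (set T)) (X : set T) : set (set (option T)) :=
  [set V | (exists U, opX U /\ V = Some @` U) \/
           (exists C, closed_in opX X C /\ stat_compact_in opX C /\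
                      V = Xs_carrier X `\` (Some @` C))].

Definition stat_continuous {T S} (opT : set (set T)) (opS : set (set S)) (f : T -> S) : Prop :=
  forall (K : set nat) (x : nat -> T) (a : T),
    stat_conv opT K x a -> stat_conv opS K (f \o x) (f a).


Definition to_Xs {Y} (X : set Y) (y : Y) : option Y := if `[< X y >] then Some y else None.

From mathcomp Require Import all_boot all_order all_algebra.
From mathcomp Require Import all_classical all_reals all_analysis.
From mathcomp Require Import Rstruct Rstruct_topology.
Import Order.TTheory GRing.Theory Num.Theory.
Local Open Scope classical_set_scope.

(* Only the open sets of X^s need to be pulled back along to_Xs: the preimage of
   [Some @` U] is the open set U, and the preimage of the complement of a
   statistically compact C is the complement of C.  Sequences cannot accumulate
   statistically on C away from their limit a ∉ C: a nonthin part of them lying in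
   C would have a nonthin subsequence converging to some c ∈ C, and also to a, so
   (a, c) is a statistical limit of points of the diagonal, forcing a = c. *)

Section Density.
Local Open Scope ring_scope.

Lemma dens_ge0 A n : 0 <= dens A n.
Proof. by rewrite /dens divr_ge0. Qed.

Lemma le_dens A B n : A `<=` B -> dens A n <= dens B n.
Proof.
move=> AB; rewrite /dens ler_wpM2r ?invr_ge0 ?ler0n// ler_nat.
apply: leq_sum => k _.
by case: (asboolP (A k)) => // Ak; rewrite asboolT //; apply: AB.
Qed.

Lemma densU A B n : dens (A `|` B) n <= dens A n + dens B n.
Proof.
rewrite /dens -mulrDl -natrD ler_wpM2r ?invr_ge0 ?ler0n// ler_nat -big_split.
apply: leq_sum => k _.
case: (asboolP ((A `|` B) k)) => //= -[Ak|Bk]; first by rewrite asboolT.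
by rewrite (asboolT Bk) addn1.
Qed.

Lemma density_zero_sub {A B : set nat} : A `<=` B -> density_zero B -> density_zero A.
Proof.
move=> AB dB; apply: (@squeeze_cvgr _ _ _ _ (fun=> 0) (dens B)) => //.
- by apply: nearW => n; rewrite dens_ge0 le_dens.
- exact: cvg_cst.
Qed.

Lemma density_zeroU {A B : set nat} :
  density_zero A -> density_zero B -> density_zero (A `|` B).
Proof.
move=> dA dB.
have dAB : dens A n + dens B n @[n --> \oo] --> (0 : RR).
  by rewrite -[0 : RR]addr0; apply: (@cvgD _ RR^o).
apply: (@squeeze_cvgr _ _ _ _ (fun=> 0) (fun n => dens A n + dens B n)) => //.
- by apply: nearW => n; rewrite dens_ge0 densU.
- exact: cvg_cst.
Qed.

Lemma nonthin_density_zeroN A : ~ density_zero A -> nonthin A.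
Proof.
move=> ndA; rewrite /nonthin ltNge; apply/negP => le0; apply: ndA.
have /fine_cvg := limn_esup_le_cvg le0 (fun n => dens_ge0 A n).
by apply: cvg_trans; apply: cvg_app.
Qed.

End Density.

Section StatConv.
Context {T : Type} {op : set (set T)}.

Lemma stat_conv_sub (M N : set nat) x a :
  N `<=` M -> nonthin N -> stat_conv op M x a -> stat_conv op N x a.
Proof.
move=> NM ntN [_ cv]; split=> // U oU Ua.
by apply: density_zero_sub (cv U oU Ua) => n [/NM].
Qed.

Lemma stat_conv_subspace {C : set T} {N x c} :
  C c -> stat_conv (subspace_open op C) N x c -> stat_conv op N x c.
Proof.
move=> Cc [ntN cv]; split=> // U oU Uc.
apply: density_zero_sub (cv (U `&` C) _ (conj Uc Cc)); last by exists U.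
by move=> n [Nn nU]; split=> // -[].
Qed.

Lemma subspace_open_sub (X C : set T) :
  C `<=` X -> subspace_open (subspace_open op X) C = subspace_open op C.
Proof.
move=> CX; apply/seteqP; split=> V [W [oW ->]].
- by case: oW => U [oU ->]; exists U; rewrite -setIA (setIidr CX).
- by exists (W `&` X); split; [exists W | rewrite -setIA (setIidr CX)].
Qed.

Lemma stat_conv_density_zero_preimage {S : Type} (f : T -> S) K x a V :
  stat_conv op K x a -> op (f @^-1` V) -> V (f a) ->
  density_zero [set n | K n /\ ~ V (f (x n))].
Proof. by move=> [_ cv] oV Va; apply: cv oV Va. Qed.

End StatConv.

Lemma open_subspace_open {Y : topologicalType} (X U : set Y) :
  open X -> subspace_open open X U -> open U.
Proof. by move=> oX [W [oW ->]]; apply: openI. Qed.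

Lemma stat_conv_pair {Y Z : topologicalType} N (x : nat -> Y) (z : nat -> Z) a b :
  stat_conv open N x a -> stat_conv open N z b ->
  stat_conv open N (fun n => (x n, z n)) (a, b).
Proof.
move=> [ntN cx] [_ cz]; split=> // U oU Uab.
have [[P Q] /= [nP nQ] PQU] := open_nbhs_nbhs (conj oU Uab).
move: nP nQ; rewrite !nbhsE => -[A [oA Aa] AP] [B [oB Bb] BQ].
apply: density_zero_sub (density_zeroU (cx A oA Aa) (cz B oB Bb)).
move=> n /= [Nn nU]; apply: contrapT => /not_orP[/not_andP[//|/contrapT An]].
by move=> /not_andP[//|/contrapT Bn]; apply: nU; apply: PQU; split; [apply: AP|apply: BQ].
Qed.

Lemma stat_conv_unique {Y : topologicalType} {N} {x : nat -> Y} {a b : Y} :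
  stat_closed open (@diagonal Y) ->
  stat_conv open N x a -> stat_conv open N x b -> a = b.
Proof.
move=> diagC xa xb; have : stat_closure open (@diagonal Y) (a, b).
  exists N, (fun n => (x n, x n)); split; first by case: xa.
  by split; [move=> n _ /= | apply: stat_conv_pair].
by rewrite diagC.
Qed.

Lemma stat_compact_density_zero {Y : topologicalType} {C : set Y} {K x a} :
  stat_closed open (@diagonal Y) -> stat_compact_in open C ->
  stat_conv open K x a -> ~ C a -> density_zero [set n | K n /\ C (x n)].
Proof.
move=> diagC cC xa nCa; apply: contrapT => /nonthin_density_zeroN ntM.
have [N [c [NM [ntN [Cc xc]]]]] := cC _ x ntM (fun n Mn => Mn.2).
have xa' : stat_conv open N x a by apply: stat_conv_sub xa => // n /NM[].
by apply: nCa; rewrite (stat_conv_unique diagC xa' (stat_conv_subspace Cc xc)).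
Qed.

Section ToXs.
Context {Y : Type} {X : set Y}.

Lemma to_Xs_preimage_image (U : set Y) :
  U `<=` X -> to_Xs X @^-1` (Some @` U) = U.
Proof.
move=> UX; apply/seteqP; split=> y; rewrite /preimage /to_Xs /=.
- by case: (asboolP (X y)) => _ [z Uz] // [<-].
- by move=> Uy; rewrite asboolT; [exists y | apply: UX].
Qed.

Lemma to_Xs_preimage_compl {C : set Y} :
  C `<=` X -> to_Xs X @^-1` (Xs_carrier X `\` Some @` C) = ~` C.
Proof.
move=> CX; apply/seteqP; split=> y; rewrite /preimage /to_Xs /=.
- case: (asboolP (X y)) => [Xy [_ nC] Cy | nXy _ /CX //].
  by apply: nC; exists y.
- move=> nCy; case: (asboolP (X y)) => Xy; last by split; [right | case].
  by split; [left; exists y | case=> z Cz [zy]; apply: nCy; rewrite -zy].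
Qed.

End ToXs.

Theorem mainTheorem19 (Y : topologicalType) (X : set Y) :
  stat_closed (@open (Y * Y)%type) (@diagonal Y) ->
  open X ->
  ~ stat_compact_in (@open Y) X ->
  stat_continuous (@open Y) (Xs_open (subspace_open (@open Y) X) X) (to_Xs X).
Proof.
move=> diagC oX _ K x a xa; split; first by case: xa.
move=> V [[U [oU ->]] | [C [[CX _] [cC ->]]]] Va.
- have UX : U `<=` X by case: oU => W [_ ->]; apply: subIsetr.
  apply: stat_conv_density_zero_preimage xa _ Va.
  by rewrite to_Xs_preimage_image //; apply: open_subspace_open oU.
- have nCa : (~` C) a by rewrite -(to_Xs_preimage_compl CX).
  rewrite /stat_compact_in subspace_open_sub // in cC.
  apply: density_zero_sub (stat_compact_density_zero diagC cC xa nCa).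
  move=> n [Kn nV]; split=> //; apply: contrapT => nC; apply: nV.
  by move: (nC : (~` C) (x n)); rewrite -(to_Xs_preimage_compl CX).
Qed.
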